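(* Let $T$ be a finite semi-simplicial triangulation of a compact surface $S$ (possibly with boundary), and let $\Delta: E(T) \to (0,\pi]$ be an assignment of dihedral angles to the edges of $T$ satisfying the following condition: for every set of faces $\mathcal{F} \subseteq F(T)$, writing $E(\mathcal{F})$ for the set of edges of $T$ incident to some face in $\mathcal{F}$, $$\sum_{e \in E(\mathcal{F})} \Delta(e) \ge \pi |\mathcal{F}|,$$ with equality if and only if $\mathcal{F} = F(T)$ or $E(\mathcal{F}) = \emptyset$. Let $t_1, \ldots, t_n$ be a collection of closed triangles (faces) of $T$, let $\mathcal{F} = t_1 \cup \cdots \cup t_n$, and assume $\mathcal{F} \ne T$. Let $\sum_\partial \mathcal{F}$ denote the sum of $\Delta(e)$ over the boundary edges $e$ of $\mathcal{F}$. Then $$0 < \operatorname{excess} \mathcal{F} < \sum_\partial \mathcal{F}.$$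
   Context: A semi-simplicial triangulation is one in which distinct closed cells may intersect in a collection of lower-dimensional cells. $V(T)$, $E(T)$, $F(T)$ denote the vertices, edges and faces of $T$. For a subcomplex $\mathcal{F}$ of $T$ (here a union of closed faces), its excess is $\operatorname{excess}\mathcal{F} = \sum_{e \in E(\mathcal{F})} \Delta(e) - \pi |F(\mathcal{F})|$, where $E(\mathcal{F})$ is the set of edges of faces of $\mathcal{F}$ and $|F(\mathcal{F})|$ is the number of faces of $\mathcal{F}$. The boundary edges of $\mathcal{F}$ are the edges lying in the intersection of $\mathcal{F}$ with the union $\overline{\mathcal{F}}$ of the closed faces of $T$ not among $t_1,\dots,t_n$ (i.e., edges incident to a face of $\mathcal{F}$ on one side and to a face not in $\mathcal{F}$ on the other). *)

From HB Require Import structures.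
From mathcomp Require Import all_boot all_order all_algebra.
From mathcomp Require Import reals trigo.
Set Implicit Arguments. Unset Strict Implicit. Unset Printing Implicit Defensive.
Import Order.TTheory GRing.Theory Num.Theory.
Local Open Scope ring_scope.

(* A finite semi-simplicial 2-complex:
   ev e j : the j-th vertex (j = 0,1) of edge e,
   fe f i : the i-th face-map of triangle f, i.e. the edge opposite vertex i. *)

Section Tri.
Variables (V E F : finType) (ev : E -> 'I_2 -> V) (fe : F -> 'I_3 -> E).

Definition fvert (f : F) (k : 'I_3) : V :=
  match val k with
  | 0 => ev (fe f (inord 1)) (inord 0)
  | 1 => ev (fe f (inord 0)) (inord 0)
  | _ => ev (fe f (inord 0)) (inord 1)
  end.

(* semi-simplicial identities d_i d_j = d_(j-1) d_i for i < j *)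
Definition semi_simplicial : Prop :=
  forall f : F,
  [/\ ev (fe f (inord 1)) (inord 0) = ev (fe f (inord 0)) (inord 0),
      ev (fe f (inord 2)) (inord 0) = ev (fe f (inord 0)) (inord 1) &
      ev (fe f (inord 2)) (inord 1) = ev (fe f (inord 1)) (inord 1)].

(* index (in the edge d_i f) of the endpoint which is vertex k of f, k <> i *)
Definition pos (k i : 'I_3) : 'I_2 :=
  inord (if (val k < val i)%N then val k else (val k).-1).

(* corners (f,k) of triangles; adjacency of two corners at v across a
   common side (with the same endpoint of that side being v) *)
Definition cadj (v : V) : rel (F * 'I_3) := fun c c' =>
  [&& fvert c.1 c.2 == v, fvert c'.1 c'.2 == v &
      [exists i : 'I_3, exists i' : 'I_3,
        [&& i != c.2, i' != c'.2, fe c.1 i == fe c'.1 i' &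
            pos c.2 i == pos c'.2 i']]].

(* T is a triangulation of a compact surface (possibly with boundary):
   semi-simplicial; every edge is a side of exactly one or two triangle-sides;
   every vertex lies in some triangle and its link is connected
   (hence, with the previous condition, an arc or a circle). *)
Definition surface_triangulation : Prop :=
  [/\ semi_simplicial,
      forall e : E, (0 < #|[set p : F * 'I_3 | fe p.1 p.2 == e]| <= 2)%N &
      forall v : V,
        (exists c : F * 'I_3, fvert c.1 c.2 = v) /\
        (forall c c' : F * 'I_3, fvert c.1 c.2 = v -> fvert c'.1 c'.2 = v ->
           connect (cadj v) c c')].

Definition edges_of (A : {set F}) : {set E} :=
  [set e | [exists f in A, exists i : 'I_3, fe f i == e]].

Definition boundary_edges (A : {set F}) : {set E} :=
  edges_of A :&: edges_of (~: A).

Variable R : realType.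
Variable D : E -> R.

Definition angle_condition : Prop :=
  forall A : {set F},
    pi * #|A|%:R <= \sum_(e in edges_of A) D e /\
    (\sum_(e in edges_of A) D e = pi * #|A|%:R <-> A = setT \/ edges_of A = set0).

Definition excess (A : {set F}) : R :=
  \sum_(e in edges_of A) D e - pi * #|A|%:R.

End Tri.

From HB Require Import structures.
From mathcomp Require Import all_boot all_order all_algebra.
From mathcomp Require Import reals trigo.
Import Order.TTheory GRing.Theory Num.Theory.
Local Open Scope ring_scope.

(* Every edge of T bounds a face of A or of its complement, and the edges
   bounding faces on both sides are exactly the boundary edges of A; hence
   excess A + excess (~: A) = excess T + sum over the boundary of A.  The
   angle condition gives excess T = 0 and, since ~: A is a nonempty proper
   set of faces, excess (~: A) > 0. *)

Lemma big_setUI (R : Type) (idx : R) (op : Monoid.com_law idx) (I : finType)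
    (A B : {set I}) (G : I -> R) :
  op (\big[op/idx]_(i in A :|: B) G i) (\big[op/idx]_(i in A :&: B) G i) =
  op (\big[op/idx]_(i in A) G i) (\big[op/idx]_(i in B) G i).
Proof.
rewrite (big_setID A) setUK setDUl setDv set0U (big_setID (A:=B) A) /=.
by rewrite [B :&: A]setIC Monoid.mulmAC -Monoid.mulmA.
Qed.

Section EdgesOf.
Context {E F : finType} (fe : F -> 'I_3 -> E).

Lemma edges_ofU (A B : {set F}) :
  edges_of fe (A :|: B) = edges_of fe A :|: edges_of fe B.
Proof.
apply/setP=> e; rewrite !inE; apply/existsP/orP.
  by case=> f /andP[]; rewrite inE => /orP[] fAB ef; [left | right];
     apply/existsP; exists f; rewrite fAB.
by case=> /existsP[f /andP[fAB ef]]; exists f; rewrite inE fAB ?orbT.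
Qed.

Lemma edges_ofUC (A : {set F}) :
  edges_of fe A :|: edges_of fe (~: A) = edges_of fe setT.
Proof. by rewrite -edges_ofU setUCr. Qed.

Lemma edges_of_neq0 (A : {set F}) : A != set0 -> edges_of fe A != set0.
Proof.
case/set0Pn=> f fA; apply/set0Pn; exists (fe f ord0).
by rewrite inE; apply/existsP; exists f; rewrite fA; apply/existsP; exists ord0.
Qed.

Context {R : realType} (D : E -> R).

Lemma excessUC (A : {set F}) :
  excess fe D A + excess fe D (~: A) =
  excess fe D setT + \sum_(e in boundary_edges fe A) D e.
Proof.
rewrite /excess addrACA -big_setUI edges_ofUC -opprD -mulrDr -natrD.
by rewrite cardsC cardsT addrAC.
Qed.

Hypothesis angleD : angle_condition fe D.

Lemma excess_setT : excess fe D setT = 0.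
Proof. by apply/eqP; rewrite subr_eq0; apply/eqP; apply/(angleD _).2; left. Qed.

Lemma excess_gt0 (A : {set F}) : A != set0 -> A != setT -> 0 < excess fe D A.
Proof.
move=> A0 AT; have [le_piA eq_piA] := angleD A.
rewrite subr_gt0 lt_neqAle le_piA andbT; apply/eqP=> /esym/eq_piA[/eqP|].
  by rewrite (negbTE AT).
by move/eqP; rewrite (negbTE (edges_of_neq0 _ A0)).
Qed.

End EdgesOf.

Theorem lemma2p5 (R : realType) (V E F : finType)
  (ev : E -> 'I_2 -> V) (fe : F -> 'I_3 -> E)
  (HT : surface_triangulation ev fe)
  (D : E -> R) (HD : forall e : E, 0 < D e <= pi)
  (Hcond : angle_condition fe D)
  (A : {set F}) (HA0 : A != set0) (HAT : A != setT) :
  0 < excess fe D A < \sum_(e in boundary_edges fe A) D e.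
Proof.
have AC0 : ~: A != set0 by apply: contraNneq HAT => AC0; rewrite -[A]setCK AC0 setC0.
have ACT : ~: A != setT by apply: contraNneq HA0 => ACT; rewrite -[A]setCK ACT setCT.
rewrite (excess_gt0 fe D Hcond) //=.
have := excessUC fe D A; rewrite (excess_setT fe D Hcond) add0r => <-.
by rewrite ltrDl (excess_gt0 fe D Hcond).
Qed.
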